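(* Let $\beta\in(\frac{1+\sqrt5}{2},2)$ and let $(\eta_i)$ be the quasi-greedy expansion of $1$. If there exists $k_0\ge1$ such that $\overline{\eta_{k_0+1}\eta_{k_0+2}\cdots}>\eta_1\eta_2\cdots$ in the lexicographic order, then some point of the quasi-greedy orbit of $1$ lies in the open interval $(\beta^{-1},\beta^{-1}(\beta-1)^{-1})$.
   Context: The quasi-greedy expansion $(\eta_i)$ of $1$ equals the greedy $\beta$-expansion of $1$ (generated by $G(x)=\beta x\bmod1$ on $[0,1)$, $G(x)=\beta x-1$ on $[1,(\beta-1)^{-1}]$, digits $\lfloor \beta G^{n-1}(1)\rfloor$) if that is infinite; if the greedy expansion is $a_1\cdots a_n0^\infty$ with $a_n=1$, then $(\eta_i)=(a_1\cdots a_{n-1}(a_n-1))^\infty$. The quasi-greedy orbit of $1$ is $Q^i(1)=\sum_{j\ge1}\eta_{i+j}\beta^{-j}$, $i\ge1$. The bar denotes digitwise reflection $a\mapsto1-a$. *)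

From Stdlib Require Import Reals Lra Lia Arith.
Open Scope R_scope.

(* floor x : Int_part x = up x - 1 satisfies  IZR (Int_part x) <= x < IZR (Int_part x) + 1 *)

Definition greedy_map (beta x : R) : R :=
  if Rlt_dec x 1 then beta * x - IZR (Int_part (beta * x)) else beta * x - 1.

Fixpoint greedy_iter (beta : R) (n : nat) (x : R) : R :=
  match n with
  | O => x
  | S m => greedy_map beta (greedy_iter beta m x)
  end.

Definition greedy_digit (beta : R) (n : nat) : nat :=
  Z.to_nat (Int_part (beta * greedy_iter beta (n - 1) 1)).

(* (eta_i)_{i>=1} is the quasi-greedy expansion of 1 in base beta
   (only the values at indices i >= 1 are meaningful). *)
Definition is_quasi_greedy (beta : R) (eta : nat -> nat) : Prop :=
  (
    (forall m : nat, exists k : nat, (k > m)%nat /\ greedy_digit beta k <> 0%nat) /\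
    (forall i : nat, (1 <= i)%nat -> eta i = greedy_digit beta i) )
  \/
  ( (* greedy expansion a_1 ... a_n 0^oo with a_n <> 0: eta = (a_1 ... a_{n-1} (a_n - 1))^oo *)
    exists n : nat, (1 <= n)%nat /\ greedy_digit beta n <> 0%nat /\
      (forall m : nat, (m > n)%nat -> greedy_digit beta m = 0%nat) /\
      (forall i : nat, (1 <= i)%nat ->
         let r := (((i - 1) mod n) + 1)%nat in
         eta i = if Nat.eqb r n then (greedy_digit beta n - 1)%nat
                 else greedy_digit beta r) ).

Definition lex_gt (u v : nat -> nat) : Prop :=
  exists n : nat, (1 <= n)%nat /\
    (forall j : nat, (1 <= j < n)%nat -> u j = v j) /\ (u n > v n)%nat.

Definition reflected_tail (eta : nat -> nat) (k : nat) : nat -> nat :=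
  fun j => (1 - eta (k + j))%nat.

(* q = Q^i(1) = sum_{j>=1} eta_{i+j} beta^{-j} *)
Definition is_quasi_greedy_orbit_point (beta : R) (eta : nat -> nat) (i : nat) (q : R) : Prop :=
  infinite_sum (fun j : nat => INR (eta (i + S j)%nat) / beta ^ (S j)) q.

(* Suppose no point Q^i(1), i >= 1, lies in the gap (1/beta, 1/(beta(beta-1))).  Then a
   digit 1 is only ever emitted from a point >= 1/(beta(beta-1)), which together with
   beta^2 - beta > 1 keeps the whole orbit above (2-beta)/(beta-1).  Along the block where
   the reflected tail of eta agrees with eta, the sums Q^(k0+j)(1) + Q^j(1) evolve by
   s |-> beta s - 1, so they stay >= 1/(beta-1).  At the first position where the reflected
   tail is larger, both digits are 0, and the sum jumps to >= beta/(beta-1) > 2: impossible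
   for two points of [0,1]. *)
From Stdlib Require Import Reals Lra Lia Classical.
Open Scope R_scope.

(* [g i] stands for Q^i(1). *)
Definition quasi_greedy_orbit (beta : R) (eta : nat -> nat) (g : nat -> R) : Prop :=
  g 0%nat = 1 /\ (forall i, 0 < g i <= 1) /\
  (forall i, g (S i) = beta * g i - INR (eta (S i))).

Lemma Int_part_0_or_1 (r : R) : 0 <= r < 2 -> Int_part r = 0%Z \/ Int_part r = 1%Z.
Proof.
  intros Hr; destruct (base_Int_part r) as [Hlo Hhi].
  assert (Hup : IZR (Int_part r) < IZR 2) by lra.
  assert (Hdown : IZR (-1) < IZR (Int_part r)) by lra.
  apply lt_IZR in Hup; apply lt_IZR in Hdown; lia.
Qed.

Lemma inv_pow_vanishes (b eps : R) : 1 < b -> 0 < eps ->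
  exists N, forall n, (N <= n)%nat -> / b ^ n < eps.
Proof.
  intros Hb Heps.
  assert (Hinv : 0 < / b < 1) by (split; [apply Rinv_0_lt_compat | rewrite <- Rinv_1;
    apply Rinv_1_lt_contravar]; lra).
  destruct (pow_lt_1_zero (/ b)) with (y := eps) as [N HN];
    [rewrite Rabs_right; lra | exact Heps |].
  exists N; intros n Hn; specialize (HN n Hn).
  rewrite <- pow_inv; rewrite Rabs_right in HN; [exact HN|].
  left; apply pow_lt; lra.
Qed.

Lemma pow_mul_bounded_eq0 (b x : R) : 1 < b -> 0 <= x -> (forall m, b ^ m * x <= 1) -> x = 0.
Proof.
  intros Hb [Hx|Hx] Hbound; [exfalso | now subst].
  destruct (inv_pow_vanishes b x Hb Hx) as [N HN]; specialize (HN N (le_n N)).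
  specialize (Hbound N); assert (Hpow : 0 < b ^ N) by (apply pow_lt; lra).
  apply Rmult_lt_compat_l with (r := b ^ N) in HN; [|exact Hpow].
  rewrite Rinv_r in HN; lra.
Qed.

Section GreedyOrbit.

Variable beta : R.
Hypothesis Hbeta : 1 < beta < 2.

Lemma greedy_map_unit_interval (x : R) : 0 <= x <= 1 ->
  greedy_map beta x = beta * x - IZR (Int_part (beta * x)) /\ 0 <= greedy_map beta x.
Proof.
  intros Hx; unfold greedy_map.
  destruct (base_Int_part (beta * x)) as [Hlo Hhi].
  destruct (Rlt_dec x 1) as [Hx1|Hx1]; [split; [reflexivity | lra]|].
  assert (Hx1' : x = 1) by lra; subst x.
  destruct (Int_part_0_or_1 (beta * 1)) as [E|E]; [lra | rewrite E in Hhi; lra |].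
  rewrite E; split; [reflexivity | lra].
Qed.

Lemma greedy_iter_unit_interval (k : nat) : 0 <= greedy_iter beta k 1 <= 1.
Proof.
  induction k as [|k IH]; simpl; [lra|].
  destruct (greedy_map_unit_interval _ IH) as [E Hpos]; rewrite E in *.
  destruct (base_Int_part (beta * greedy_iter beta k 1)); lra.
Qed.

Lemma greedy_iter_succ (k : nat) :
  greedy_iter beta (S k) 1 = beta * greedy_iter beta k 1 - INR (greedy_digit beta (S k)).
Proof.
  pose proof (greedy_iter_unit_interval k) as Hk; simpl.
  destruct (greedy_map_unit_interval _ Hk) as [E _]; rewrite E.
  unfold greedy_digit; replace (S k - 1)%nat with k by lia.
  destruct (Int_part_0_or_1 (beta * greedy_iter beta k 1)) as [D|D]; [nra | |];
    rewrite D; simpl; ring.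
Qed.

Lemma greedy_iter_eq0_stable (k m : nat) :
  greedy_iter beta k 1 = 0 -> greedy_iter beta (k + m) 1 = 0.
Proof.
  intros H0; induction m as [|m IH]; [now rewrite Nat.add_0_r|].
  rewrite Nat.add_succ_r, greedy_iter_succ, IH.
  pose proof (greedy_iter_unit_interval (S (k + m))) as Hnext.
  rewrite greedy_iter_succ, IH in Hnext; pose proof (pos_INR (greedy_digit beta (S (k + m)))).
  lra.
Qed.

Lemma greedy_digit_after_eq0 (k m : nat) :
  (k < m)%nat -> greedy_iter beta k 1 = 0 -> greedy_digit beta m = 0%nat.
Proof.
  intros Hkm H0.
  replace m with (S (k + (m - k - 1))) by lia.
  pose proof (greedy_iter_succ (k + (m - k - 1))) as E.
  rewrite <- Nat.add_succ_r in E at 1; rewrite !greedy_iter_eq0_stable in E by exact H0.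
  apply INR_eq; simpl; lra.
Qed.

Lemma greedy_iter_pos_before_digit (k m : nat) :
  (k < m)%nat -> greedy_digit beta m <> 0%nat -> 0 < greedy_iter beta k 1.
Proof.
  intros Hkm Hd; destruct (greedy_iter_unit_interval k) as [[Hpos|H0] _]; [exact Hpos|].
  now exfalso; apply Hd, (greedy_digit_after_eq0 k).
Qed.

Lemma greedy_iter_eq0_of_finite (n : nat) :
  (forall m, (m > n)%nat -> greedy_digit beta m = 0%nat) -> greedy_iter beta n 1 = 0.
Proof.
  intros Hzero.
  assert (Hscale : forall m, greedy_iter beta (n + m) 1 = beta ^ m * greedy_iter beta n 1).
  { induction m as [|m IH]; [rewrite Nat.add_0_r; simpl; ring|].
    rewrite Nat.add_succ_r, greedy_iter_succ, Hzero, IH by lia; simpl; ring. }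
  apply (pow_mul_bounded_eq0 beta); [lra | apply greedy_iter_unit_interval |].
  intros m; rewrite <- Hscale; apply greedy_iter_unit_interval.
Qed.

End GreedyOrbit.

Lemma quasi_greedy_orbit_infinite (beta : R) (eta : nat -> nat) : 1 < beta < 2 ->
  (forall m, exists k, (k > m)%nat /\ greedy_digit beta k <> 0%nat) ->
  (forall i, (1 <= i)%nat -> eta i = greedy_digit beta i) ->
  quasi_greedy_orbit beta eta (fun k => greedy_iter beta k 1).
Proof.
  intros Hbeta Hinf Heta; split; [reflexivity | split].
  - intros i; split; [| apply greedy_iter_unit_interval; exact Hbeta].
    destruct (Hinf i) as [k [Hk Hd]]; exact (greedy_iter_pos_before_digit beta Hbeta i k Hk Hd).
  - intros i; rewrite Heta by lia; apply greedy_iter_succ; exact Hbeta.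
Qed.

Lemma succ_mod_cases (n i : nat) : n <> 0%nat ->
  (i mod n + 1 = n /\ S i mod n = 0)%nat \/ (i mod n + 1 <> n /\ S i mod n = i mod n + 1)%nat.
Proof.
  intros Hn; pose proof (Nat.div_mod_eq i n) as Hdiv; pose proof (Nat.mod_upper_bound i n Hn).
  destruct (Nat.eq_dec (i mod n + 1) n) as [E|E]; [left | right]; split; try exact E.
  - symmetry; apply (Nat.mod_unique _ _ (i / n + 1)); [lia|]; rewrite Nat.mul_add_distr_l; lia.
  - symmetry; apply (Nat.mod_unique _ _ (i / n)); lia.
Qed.

(* With a_1 ... a_n 0^oo the orbit of 1 hits 0 at step n; the quasi-greedy orbit instead
   returns to 1 there, because beta G^(n-1)(1) - (a_n - 1) = 1. *)
Lemma quasi_greedy_orbit_finite (beta : R) (eta : nat -> nat) (n : nat) : 1 < beta < 2 ->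
  (1 <= n)%nat -> greedy_digit beta n <> 0%nat ->
  (forall m, (m > n)%nat -> greedy_digit beta m = 0%nat) ->
  (forall i, (1 <= i)%nat -> let r := ((i - 1) mod n + 1)%nat in
     eta i = if Nat.eqb r n then (greedy_digit beta n - 1)%nat else greedy_digit beta r) ->
  quasi_greedy_orbit beta eta (fun i => greedy_iter beta (i mod n) 1).
Proof.
  intros Hbeta Hn Hdn Hzero Heta.
  assert (Hn0 : n <> 0%nat) by lia.
  split; [rewrite Nat.Div0.mod_0_l; reflexivity | split].
  - intros i; split; [| apply greedy_iter_unit_interval; exact Hbeta].
    apply (greedy_iter_pos_before_digit beta Hbeta _ n); [apply Nat.mod_upper_bound |]; auto.
  - intros i; rewrite Heta by lia; cbv zeta; replace (S i - 1)%nat with i by lia.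
    destruct (succ_mod_cases n i Hn0) as [[E M] | [E M]]; rewrite M.
    + rewrite E, Nat.eqb_refl, minus_INR by lia.
      pose proof (greedy_iter_succ beta Hbeta (i mod n)) as Hstep.
      replace (S (i mod n)) with n in Hstep by lia.
      rewrite (greedy_iter_eq0_of_finite beta Hbeta n Hzero) in Hstep; simpl; lra.
    + apply Nat.eqb_neq in E; rewrite E, Nat.add_1_r; apply greedy_iter_succ; exact Hbeta.
Qed.

Lemma quasi_greedy_orbit_exists (beta : R) (eta : nat -> nat) : 1 < beta < 2 ->
  is_quasi_greedy beta eta -> exists g, quasi_greedy_orbit beta eta g.
Proof.
  intros Hbeta [[Hinf Heta] | [n [Hn [Hdn [Hzero Heta]]]]].
  - eexists; exact (quasi_greedy_orbit_infinite beta eta Hbeta Hinf Heta).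
  - eexists; exact (quasi_greedy_orbit_finite beta eta n Hbeta Hn Hdn Hzero Heta).
Qed.

Section Expansion.

Variables (b : R) (eta : nat -> nat) (g : nat -> R).
Hypothesis Hb : 1 < b.
Hypothesis Hg : forall k, 0 <= g k <= 1.
Hypothesis Hstep : forall k, g (S k) = b * g k - INR (eta (S k)).

Lemma orbit_partial_sum (i m : nat) :
  sum_f_R0 (fun j => INR (eta (i + S j)%nat) / b ^ S j) m = g i - g (i + S m)%nat / b ^ S m.
Proof.
  induction m as [|m IH].
  - simpl; rewrite Nat.add_1_r, Hstep; field; lra.
  - rewrite tech5, IH, (Nat.add_succ_r i (S m)), Hstep; simpl.
    field; split; [apply pow_nonzero |]; lra.
Qed.

Lemma orbit_expansion (i : nat) :
  infinite_sum (fun j => INR (eta (i + S j)%nat) / b ^ S j) (g i).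
Proof.
  intros eps Heps; destruct (inv_pow_vanishes b eps Hb Heps) as [N HN].
  exists N; intros n Hn; unfold Rdist; rewrite orbit_partial_sum.
  specialize (HN (S n) ltac:(lia)).
  assert (Hpow : 0 < / b ^ S n) by (apply Rinv_0_lt_compat, pow_lt; lra).
  destruct (Hg (i + S n)%nat).
  replace (g i - g (i + S n)%nat / b ^ S n - g i) with (- (g (i + S n)%nat * / b ^ S n))
    by (unfold Rdiv; ring).
  rewrite Rabs_Ropp, Rabs_right by nra; nra.
Qed.

End Expansion.

Lemma golden_lt (beta : R) : (1 + sqrt 5) / 2 < beta -> 1 < beta /\ 1 < beta * (beta - 1).
Proof.
  intros H; assert (H5 : sqrt 5 * sqrt 5 = 5) by (apply sqrt_sqrt; lra).
  pose proof (sqrt_pos 5); split; nra.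
Qed.

Lemma quasi_greedy_digit_0_or_1 (beta : R) (eta : nat -> nat) (g : nat -> R) :
  beta < 2 -> quasi_greedy_orbit beta eta g ->
  forall i, eta (S i) = 0%nat \/ eta (S i) = 1%nat.
Proof.
  intros Hb2 [_ [Hg Hstep]] i.
  assert (Hlt : INR (eta (S i)) < INR 2).
  { pose proof (Hg i); pose proof (Hg (S i)); rewrite Hstep in *; simpl; nra. }
  apply INR_lt in Hlt; lia.
Qed.

Section AvoidingOrbit.

Variables (beta : R) (eta : nat -> nat) (g : nat -> R).
Hypothesis Hgolden : (1 + sqrt 5) / 2 < beta.
Hypothesis Hlt2 : beta < 2.
Hypothesis Horbit : quasi_greedy_orbit beta eta g.
Hypothesis Havoid : forall i, (1 <= i)%nat -> ~ (/ beta < g i < / beta * / (beta - 1)).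

Let Hbeta := golden_lt beta Hgolden.
Let Hg := proj1 (proj2 Horbit).
Let Hstep := proj2 (proj2 Horbit).
Let Hdigit := quasi_greedy_digit_0_or_1 beta eta g Hlt2 Horbit.

Lemma orbit_gap (i : nat) : beta * g i <= 1 \/ 1 <= beta * (beta - 1) * g i.
Proof.
  destruct i as [|i]; [right; rewrite (proj1 Horbit); lra|].
  destruct (Rle_or_lt (beta * g (S i)) 1) as [H|H]; [now left|].
  destruct (Rle_or_lt 1 (beta * (beta - 1) * g (S i))) as [H'|H']; [now right|].
  exfalso; apply (Havoid (S i)); [lia | split].
  - apply Rmult_lt_reg_l with beta; [lra|]; rewrite Rinv_r; lra.
  - apply Rmult_lt_reg_l with (beta * (beta - 1)); [lra|].
    replace (beta * (beta - 1) * (/ beta * / (beta - 1))) with 1 by (field; lra); lra.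
Qed.

(* A digit 1 is emitted only from a point >= 1/(beta(beta-1)), outside the gap; at
   m = 0 the bound reads (beta-1)^2 >= 2 - beta, i.e. beta^2 - beta >= 1. *)
Lemma orbit_lower_bound (m : nat) : 2 - beta <= (beta - 1) * g (S m).
Proof.
  induction m as [|m IH].
  - pose proof (Hg 1%nat); pose proof (Hstep 0%nat) as R; rewrite (proj1 Horbit) in R.
    destruct (Hdigit 0%nat) as [E|E]; rewrite E in R; simpl in R; nra.
  - pose proof (Hg (S m)); pose proof (Hg (S (S m))); pose proof (Hstep (S m)) as R.
    destruct (Hdigit (S m)) as [E|E]; rewrite E in R; simpl in R.
    + rewrite R; nra.
    + destruct (orbit_gap (S m)); nra.
Qed.

Lemma reflected_pair_lower_bound (k0 n : nat) : (1 <= k0)%nat ->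
  (forall j, (1 <= j <= n)%nat -> reflected_tail eta k0 j = eta j) ->
  1 <= (beta - 1) * (g (k0 + n)%nat + g n).
Proof.
  unfold reflected_tail; intros Hk0 Hrefl; induction n as [|n IH].
  - rewrite Nat.add_0_r, (proj1 Horbit).
    replace k0 with (S (k0 - 1)) by lia; pose proof (orbit_lower_bound (k0 - 1)); lra.
  - specialize (IH (fun j Hj => Hrefl j ltac:(lia))).
    specialize (Hrefl (S n) ltac:(lia)); rewrite Nat.add_succ_r in *.
    rewrite !Hstep.
    destruct (Hdigit n) as [E1|E1]; destruct (Hdigit (k0 + n)%nat) as [E2|E2];
      rewrite E1, E2 in *; try lia; simpl; nra.
Qed.

Lemma not_lex_gt_reflected_tail (k0 : nat) :
  (1 <= k0)%nat -> ~ lex_gt (reflected_tail eta k0) eta.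
Proof.
  intros Hk0 [n [Hn [Hprefix Hgt]]]; destruct n as [|n]; [lia|].
  pose proof (reflected_pair_lower_bound k0 n Hk0
    (fun j Hj => Hprefix j ltac:(lia))) as Hsum.
  unfold reflected_tail in Hgt.
  assert (Hzero : eta (S n) = 0%nat /\ eta (S (k0 + n)) = 0%nat) by (rewrite <- Nat.add_succ_r; lia).
  destruct Hzero as [Z1 Z2].
  pose proof (Hstep n) as R1; pose proof (Hstep (k0 + n)%nat) as R2.
  rewrite Z1 in R1; rewrite Z2 in R2; simpl in R1, R2.
  pose proof (Hg (S n)); pose proof (Hg (S (k0 + n))); nra.
Qed.

End AvoidingOrbit.

Lemma quasi_greedy_orbit_hits_gap (beta : R) (eta : nat -> nat) (g : nat -> R) :
  (1 + sqrt 5) / 2 < beta -> beta < 2 -> quasi_greedy_orbit beta eta g ->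
  (exists k0, (1 <= k0)%nat /\ lex_gt (reflected_tail eta k0) eta) ->
  exists i, (1 <= i)%nat /\ / beta < g i < / beta * / (beta - 1).
Proof.
  intros Hgolden Hlt2 Horbit [k0 [Hk0 Hlex]]; apply NNPP; intros Hnone.
  apply (not_lex_gt_reflected_tail beta eta g Hgolden Hlt2 Horbit) with k0; auto.
  intros i Hi Hin; apply Hnone; exists i; auto.
Qed.

Theorem lemma3p10 (beta : R) (eta : nat -> nat) :
  (1 + sqrt 5) / 2 < beta -> beta < 2 ->
  is_quasi_greedy beta eta ->
  (exists k0 : nat, (1 <= k0)%nat /\ lex_gt (reflected_tail eta k0) eta) ->
  exists (i : nat) (q : R), (1 <= i)%nat /\ is_quasi_greedy_orbit_point beta eta i q /\
    / beta < q < / beta * / (beta - 1).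
Proof.
  intros Hgolden Hlt2 Hqg Hrefl.
  destruct (golden_lt beta Hgolden) as [Hgt1 _].
  destruct (quasi_greedy_orbit_exists beta eta ltac:(lra) Hqg) as [g Horbit].
  destruct (quasi_greedy_orbit_hits_gap beta eta g Hgolden Hlt2 Horbit Hrefl) as [i [Hi Hgap]].
  exists i, (g i); split; [exact Hi | split; [| exact Hgap]].
  destruct Horbit as [_ [Hg Hstep]].
  apply orbit_expansion; [exact Hgt1 | | exact Hstep].
  intros k; destruct (Hg k); lra.
Qed.
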